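(* Let $R$ be an arbitrary (not necessarily unital) associative ring. Then the full subcategory of s-unital left $R$-modules is closed under submodules, quotient modules, extensions, and all colimits (including direct sums and direct limits) in the abelian category of all (nonunital) left $R$-modules. In other words, it is a hereditary torsion class in that category.
   Context: Modules over a nonunital ring $R$ are not assumed unital; the category of all left $R$-modules is abelian. A left $R$-module $M$ is called s-unital if for every $m\in M$ there exists $e\in R$ (not necessarily idempotent) with $em=m$. *)

From HB Require Import structures.
From mathcomp Require Import all_boot all_algebra.
Set Implicit Arguments. Unset Strict Implicit. Unset Printing Implicit Defensive.
Import GRing.Theory.
Local Open Scope ring_scope.

Record nuRing := NuRing {
  rcar :> zmodType;
  rmul : rcar -> rcar -> rcar;
  rmulA : forall a b c, rmul a (rmul b c) = rmul (rmul a b) c;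
  rmulDl : forall a b c, rmul (a + b) c = rmul a c + rmul b c;
  rmulDr : forall a b c, rmul a (b + c) = rmul a b + rmul a c }.

Record lmod (R : nuRing) := LMod {
  mcar :> zmodType;
  act : R -> mcar -> mcar;
  actA : forall (r s : R) (m : mcar), act (rmul r s) m = act r (act s m);
  actDl : forall (r s : R) (m : mcar), act (r + s) m = act r m + act s m;
  actDr : forall (r : R) (m n : mcar), act r (m + n) = act r m + act r n }.

Arguments act {R} l r m : rename.

Definition is_hom (R : nuRing) (M N : lmod R) (f : M -> N) : Prop :=
  (forall x y : M, f (x + y) = f x + f y) /\
  (forall (r : R) (x : M), f (act M r x) = act N r (f x)).

Definition s_unital (R : nuRing) (M : lmod R) : Prop :=
  forall m : M, exists e : R, act M e m = m.

(* A diagram of modules indexed by a (small) quiver: vertices I, arrows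
   J i j, objects F i and morphisms phi i j a : F i -> F j.  (Diagrams on
   small categories are special cases; colimits coincide.) *)
Definition is_cocone (R : nuRing) (I : Type) (J : I -> I -> Type)
  (F : I -> lmod R) (phi : forall i j, J i j -> F i -> F j)
  (L : lmod R) (iota : forall i, F i -> L) : Prop :=
  (forall i, is_hom (iota i)) /\
  (forall i j (a : J i j) (x : F i), iota j (phi i j a x) = iota i x).

Definition is_colimit (R : nuRing) (I : Type) (J : I -> I -> Type)
  (F : I -> lmod R) (phi : forall i j, J i j -> F i -> F j)
  (L : lmod R) (iota : forall i, F i -> L) : Prop :=
  is_cocone phi iota /\
  forall (L' : lmod R) (iota' : forall i, F i -> L'),
    is_cocone phi iota' ->
    exists u : L -> L',
      [/\ is_hom u, (forall i x, u (iota i x) = iota' i x) &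
          (forall v : L -> L', is_hom v -> (forall i x, v (iota i x) = iota' i x) ->
             forall y, v y = u y)].

From HB Require Import structures.
From mathcomp Require Import all_boot all_algebra.
From mathcomp Require Import boolp.
Set Implicit Arguments. Unset Strict Implicit. Unset Printing Implicit Defensive.
Import GRing.Theory.
Local Open Scope ring_scope.

(* Everything else rests
   on the identity (x + e - e x) m = x m + e (m - x m): if e fixes the defect
   m - x m of x at m, then x + e - e x fixes m. In an extension
   0 -> N -> M -> P -> 0, choose x fixing the image of m in P; the defect then
   lies in N, where some e fixes it. A colimit is the sum of the images of its
   cocone maps, and by the same identity a finite sum of elements of images of
   s-unital modules is s-unital, by induction on the number of summands. *)

Section AdditiveMap.
Variables (U V : zmodType) (f : U -> V).
Hypothesis fD : {morph f : x y / x + y}.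

Lemma addmorph0 : f 0 = 0.
Proof. by apply: (addrI (f 0)); rewrite -fD !addr0. Qed.

Lemma addmorphN x : f (- x) = - f x.
Proof. by apply: (addrI (f x)); rewrite -fD !subrr addmorph0. Qed.

Lemma addmorphB x y : f (x - y) = f x - f y.
Proof. by rewrite fD addmorphN. Qed.

End AdditiveMap.

Section ModuleBasics.
Variables (R : nuRing) (M N : lmod R).

Lemma act0r (m : M) : act M 0 m = 0.
Proof. exact: (@addmorph0 _ _ (act M ^~ m) (fun r s => actDl r s m)). Qed.

Lemma actr0 (r : R) : act M r 0 = 0.
Proof. exact: (@addmorph0 _ _ (act M r) (actDr r)). Qed.

Lemma actBl (r s : R) (m : M) : act M (r - s) m = act M r m - act M s m.
Proof. exact: (@addmorphB _ _ (act M ^~ m) (fun r s => actDl r s m)). Qed.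

Lemma actBr (r : R) (m n : M) : act M r (m - n) = act M r m - act M r n.
Proof. exact: (@addmorphB _ _ (act M r) (actDr r)). Qed.

Lemma homD (f : M -> N) : is_hom f -> {morph f : x y / x + y}.
Proof. by case. Qed.

Lemma hom_act (f : M -> N) r x : is_hom f -> f (act M r x) = act N r (f x).
Proof. by case=> _ ->. Qed.

Lemma hom_comp (P : lmod R) (f : M -> N) (g : N -> P) :
  is_hom f -> is_hom g -> is_hom (g \o f).
Proof. by move=> [fD fA] [gD gA]; split=> *; rewrite /= ?fD ?gD ?fA ?gA. Qed.

End ModuleBasics.

Section UnitalElements.
Variable R : nuRing.

Definition s_unital_elt (M : lmod R) (m : M) : Prop := exists e : R, act M e m = m.

Lemma s_unital_elt_hom (M N : lmod R) (f : M -> N) m :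
  is_hom f -> s_unital_elt m -> s_unital_elt (f m).
Proof. by move=> hf [e he]; exists e; rewrite -hom_act // he. Qed.

Lemma s_unital_elt_inj (M N : lmod R) (f : M -> N) m :
  is_hom f -> injective f -> s_unital_elt (f m) -> s_unital_elt m.
Proof. by move=> hf finj [e he]; exists e; apply: finj; rewrite hom_act. Qed.

Lemma s_unital_elt_defect (M : lmod R) (x : R) (m : M) :
  s_unital_elt (m - act M x m) -> s_unital_elt m.
Proof.
case=> e he; exists (x + e - rmul e x).
by rewrite actBl actDl actA -addrA -actBr he addrC subrK.
Qed.

Lemma s_unital_sub (N M : lmod R) (f : N -> M) :
  is_hom f -> injective f -> s_unital M -> s_unital N.
Proof. by move=> hf finj hM n; apply: s_unital_elt_inj hf finj (hM (f n)). Qed.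

Lemma s_unital_quotient (M Q : lmod R) (g : M -> Q) :
  is_hom g -> (forall q, exists m, g m = q) -> s_unital M -> s_unital Q.
Proof. by move=> hg gsurj hM q; have [m <-] := gsurj q; apply: s_unital_elt_hom. Qed.

Lemma s_unital_extension (N M P : lmod R) (f : N -> M) (g : M -> P) :
  is_hom f -> is_hom g -> (forall m, g m = 0 -> exists n, f n = m) ->
  s_unital N -> s_unital P -> s_unital M.
Proof.
move=> hf hg ker_g hN hP m; have [x hx] := hP (g m).
have [n hn] : exists n, f n = m - act M x m.
  by apply: ker_g; rewrite (addmorphB (homD hg)) hom_act // hx subrr.
by apply: (s_unital_elt_defect (x := x)); rewrite -hn; apply: s_unital_elt_hom.
Qed.

End UnitalElements.

Section SubModule.
Variables (R : nuRing) (M : lmod R) (P : M -> Prop).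
Hypotheses (P0 : P 0) (PB : forall x y, P x -> P y -> P (x - y))
  (Pact : forall r x, P x -> P (act M r x)).

Definition submod_pred : {pred M} := fun y => `[< P y >].

Lemma submod_pred_zmod_closed : zmod_closed submod_pred.
Proof.
split=> [|x y /asboolP Px /asboolP Py]; apply/asboolP; first exact: P0.
exact: PB.
Qed.

HB.instance Definition _ := GRing.isZmodClosed.Build M submod_pred
  submod_pred_zmod_closed.

Definition submod_type := {y : M | y \in submod_pred}.
HB.instance Definition _ := [isSub of submod_type for @sval _ _].
HB.instance Definition _ := [Choice of submod_type by <:].
HB.instance Definition _ := [SubChoice_isSubZmodule of submod_type by <:].

Definition submod_act (r : R) (a : submod_type) : submod_type :=
  exist _ (act M r (val a)) (asboolT (Pact r (asboolW (valP a)))).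

Lemma submod_actA r s a : submod_act (rmul r s) a = submod_act r (submod_act s a).
Proof. by apply: val_inj; rewrite /= actA. Qed.
Lemma submod_actDl r s a : submod_act (r + s) a = submod_act r a + submod_act s a.
Proof. by apply: val_inj; rewrite /= actDl. Qed.
Lemma submod_actDr r a b : submod_act r (a + b) = submod_act r a + submod_act r b.
Proof. by apply: val_inj; rewrite /= actDr. Qed.

Definition submod : lmod R := LMod submod_actA submod_actDl submod_actDr.

Lemma submod_val_hom : is_hom (fun a : submod => val a : M).
Proof. by []. Qed.

End SubModule.

Section SumOfImages.
Variables (R : nuRing) (I : Type) (F : I -> lmod R) (L : lmod R)
  (iota : forall i, F i -> L).
Arguments iota : clear implicits.

Inductive in_sum_images : L -> Prop :=
  | in_sum_images0 : in_sum_images 0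
  | in_sum_imagesD i (a : F i) t : in_sum_images t -> in_sum_images (iota i a + t).

Lemma in_sum_images_iota i (a : F i) : in_sum_images (iota i a).
Proof. by rewrite -[iota i a]addr0; apply/in_sum_imagesD/in_sum_images0. Qed.

Lemma in_sum_images_add s t :
  in_sum_images s -> in_sum_images t -> in_sum_images (s + t).
Proof.
move=> hs ht; elim: hs => [|i a s' _ IH]; first by rewrite add0r.
by rewrite -addrA; apply: in_sum_imagesD.
Qed.

Hypothesis iota_hom : forall i, is_hom (iota i).

Lemma in_sum_images_opp t : in_sum_images t -> in_sum_images (- t).
Proof.
elim=> [|i a s _ IH]; first by rewrite oppr0; apply: in_sum_images0.
by rewrite opprD -(addmorphN (homD (iota_hom i))); apply: in_sum_imagesD.
Qed.

Lemma in_sum_images_sub s t :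
  in_sum_images s -> in_sum_images t -> in_sum_images (s - t).
Proof. by move=> hs /in_sum_images_opp; apply: in_sum_images_add. Qed.

Lemma in_sum_images_act r t : in_sum_images t -> in_sum_images (act L r t).
Proof.
elim=> [|i a s _ IH]; first by rewrite actr0; apply: in_sum_images0.
by rewrite actDr -hom_act //; apply: in_sum_imagesD.
Qed.

Lemma s_unital_sum_images t :
  (forall i, s_unital (F i)) -> in_sum_images t -> s_unital_elt t.
Proof.
move=> hF; elim=> [|i a s _ [x hx]]; first by exists 0; rewrite act0r.
apply: (s_unital_elt_defect (x := x)).
rewrite actDr hx -hom_act // [X in _ - X]addrC addrKA.
by rewrite -(addmorphB (homD (iota_hom i))); apply/s_unital_elt_hom/hF.
Qed.

End SumOfImages.

Section Colimit.
Variables (R : nuRing) (I : Type) (J : I -> I -> Type) (F : I -> lmod R)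
  (phi : forall i j, J i j -> F i -> F j) (L : lmod R) (iota : forall i, F i -> L).
Arguments iota : clear implicits.
Hypothesis colim : is_colimit phi iota.

Lemma colimit_iota_hom i : is_hom (iota i).
Proof. by case: colim => [[]]. Qed.

Lemma colimit_endo_id (v : L -> L) :
  is_hom v -> (forall i x, v (iota i x) = iota i x) -> forall y, v y = y.
Proof.
move=> hv vE y; have [u [_ _ u_uniq]] := colim.2 L iota colim.1.
have y_u : y = u y by apply: (u_uniq id).
by rewrite {2}y_u; apply: u_uniq.
Qed.

(* The cocone factors through the submodule [P], and the composite
   [L -> P -> L] is then the identity. *)
Lemma colimit_generated (P : L -> Prop) (P0 : P 0)
    (PB : forall x y, P x -> P y -> P (x - y))
    (Pact : forall r x, P x -> P (act L r x)) :
  (forall i x, P (iota i x)) -> forall y, P y.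
Proof.
move=> Piota.
pose iotaP i x : submod P0 PB Pact := exist _ (iota i x) (asboolT (Piota i x)).
have iotaP_cocone : is_cocone phi iotaP.
  split=> [i | i j a x]; last by apply: val_inj; rewrite /= colim.1.2.
  have hi := colimit_iota_hom i.
  by split=> [x x' | r x]; apply: val_inj; rewrite /= ?hom_act ?(homD hi).
have [u [hu uE _]] := colim.2 _ iotaP iotaP_cocone.
have u_id : forall y, val (u y) = y.
  apply: (colimit_endo_id (v := val \o u)) => [|i x /=]; last by rewrite uE.
  exact: hom_comp hu (submod_val_hom _ _ _).
by move=> y; have := valP (u y); rewrite u_id => /asboolP.
Qed.

Lemma s_unital_colimit : (forall i, s_unital (F i)) -> s_unital L.
Proof.
move=> hF y; apply: (s_unital_sum_images colimit_iota_hom hF).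
apply: colimit_generated (in_sum_images_iota _) y.
- exact: in_sum_images0.
- exact: in_sum_images_sub colimit_iota_hom.
- exact: in_sum_images_act colimit_iota_hom.
Qed.

End Colimit.

Theorem proposition2p2 (R : nuRing) :
  (* closed under submodules (monomorphisms) *)
  (forall (N M : lmod R) (f : N -> M),
      is_hom f -> injective f -> s_unital M -> s_unital N) /\
  (* closed under quotient modules (epimorphisms) *)
  (forall (M Q : lmod R) (g : M -> Q),
      is_hom g -> (forall q, exists m, g m = q) -> s_unital M -> s_unital Q) /\
  (* closed under extensions: 0 -> N -f-> M -g-> P -> 0 exact *)
  (forall (N M P : lmod R) (f : N -> M) (g : M -> P),
      is_hom f -> is_hom g -> injective f -> (forall q, exists m, g m = q) ->
      (forall m : M, g m = 0 <-> exists n : N, f n = m) ->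
      s_unital N -> s_unital P -> s_unital M) /\
  (* closed under all (small) colimits *)
  (forall (I : Type) (J : I -> I -> Type) (F : I -> lmod R)
          (phi : forall i j, J i j -> F i -> F j)
          (L : lmod R) (iota : forall i, F i -> L),
      (forall i j (a : J i j), is_hom (phi i j a)) ->
      is_colimit phi iota ->
      (forall i, s_unital (F i)) -> s_unital L).
Proof.
split; first exact: s_unital_sub.
split; first exact: s_unital_quotient.
split.
  move=> N M P f g hf hg _ _ exact_fg.
  by apply: s_unital_extension hf hg _ => m /exact_fg.
by move=> I J F phi L iota _; apply: s_unital_colimit.
Qed.
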